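(* Let $Q\succeq0$, $q\in\mathbb{R}^n$, $A\succ0$, $v\in\mathbb{R}^n$, and let $m>0$ satisfy Requirement 1 (see context). For $k\in\mathbb{N}$ let $x_k^\star$ be the unique minimizer of $J_k$ over $\mathbb{R}^n$. Then: (1) $x_k^\star\in\mathcal{C}$ for every $k\in\mathbb{N}$; (2) $x_k^\star\to x^\star$ as $k\to\infty$, where $x^\star=\arg\min_{x\in\mathcal{X}^\star}g(x)$ is the (unique) minimizer of $g$ over the solution set $\mathcal{X}^\star$ of the constrained problem; in particular $x^\star\in\mathcal{X}^\star$.
   Context: $Q\in\mathbb{R}^{n\times n}$ symmetric positive semidefinite, $A\in\mathbb{R}^{n\times n}$ symmetric positive definite. $f(x)=\tfrac12 x^\top Qx+q^\top x$, $g(x)=(x-v)^\top A(x-v)$, $\mathcal{C}=\{x: g(x)\le1\}$, $\partial\mathcal{C}=\{x:g(x)=1\}$. The constrained problem is $\min_{x\in\mathcal{C}} f(x)$ with (nonempty, compact, convex) solution set $\mathcal{X}^\star=\arg\min_{x\in\mathcal{C}}f(x)$. For $k\in\mathbb{N}=\{1,2,\dots\}$: $p_k(x)=\frac{m}{k}g(x)^k$, $J_k(x)=f(x)+p_k(x)$. Requirement 1: $m\ge m_{\min}:=\max(\hat m_{\min},0)$, where $\hat m_{\min}=\max_{x:\,g(x)=1}\; -\frac{\langle\nabla g(x),\nabla f(x)\rangle}{\langle\nabla g(x),\nabla g(x)\rangle}$; equivalently $m\ge0$ and $\langle \nabla g(x),\nabla f(x)+m\nabla g(x)\rangle\ge0$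 for all $x$ with $g(x)=1$. *)

From HB Require Import structures.
From mathcomp Require Import all_boot all_order all_algebra.
From mathcomp Require Import all_classical all_reals all_analysis.
Set Implicit Arguments. Unset Strict Implicit. Unset Printing Implicit Defensive.
Import Order.TTheory GRing.Theory Num.Theory.
Import numFieldNormedType.Exports.
Local Open Scope ring_scope.

Section Defs.
Variables (R : realType) (n : nat).

Definition dotv (u w : 'cV[R]_n) : R := (u^T *m w) 0 0.

Definition qform (M : 'M[R]_n) (x : 'cV[R]_n) : R := (x^T *m M *m x) 0 0.

Definition psd (M : 'M[R]_n) : Prop := M^T = M /\ forall x, 0 <= qform M x.
Definition pd (M : 'M[R]_n) : Prop := M^T = M /\ forall x, x != 0 -> 0 < qform M x.

Definition fobj (Q : 'M[R]_n) (q : 'cV[R]_n) (x : 'cV[R]_n) : R :=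
  2^-1 * qform Q x + dotv q x.
Definition gcon (A : 'M[R]_n) (v : 'cV[R]_n) (x : 'cV[R]_n) : R :=
  qform A (x - v).

(* gradients: grad f(x) = Q x + q (Q symmetric), grad g(x) = 2 A (x - v) (A symmetric) *)
Definition grad_f (Q : 'M[R]_n) (q : 'cV[R]_n) (x : 'cV[R]_n) : 'cV[R]_n := Q *m x + q.
Definition grad_g (A : 'M[R]_n) (v : 'cV[R]_n) (x : 'cV[R]_n) : 'cV[R]_n :=
  2%:R *: (A *m (x - v)).

Definition pen (A : 'M[R]_n) (v : 'cV[R]_n) (m : R) (k : nat) (x : 'cV[R]_n) : R :=
  m / k%:R * gcon A v x ^+ k.
Definition Jk Q q A v m k (x : 'cV[R]_n) : R := fobj Q q x + pen A v m k x.

(* Requirement 1 (equivalent form given in the context) *)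
Definition requirement1 Q q A v (m : R) : Prop :=
  0 <= m /\ forall x, gcon A v x = 1 ->
    0 <= dotv (grad_g A v x) (grad_f Q q x + m *: grad_g A v x).

Definition solset Q q A v (x : 'cV[R]_n) : Prop :=
  gcon A v x <= 1 /\ forall y, gcon A v y <= 1 -> fobj Q q x <= fobj Q q y.

Definition gmin_on_solset Q q A v (x : 'cV[R]_n) : Prop :=
  solset Q q A v x /\ forall y, solset Q q A v y -> gcon A v x <= gcon A v y.

End Defs.

From HB Require Import structures.
From mathcomp Require Import all_boot all_order all_algebra.
From mathcomp Require Import all_classical all_reals all_analysis.
From mathcomp.algebra_tactics Require Import ring lra.
Set Implicit Arguments.
Unset Strict Implicit.
Unset Printing Implicit Defensive.
Import Order.TTheory GRing.Theory Num.Theory.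
Import numFieldNormedType.Exports.
Local Open Scope classical_set_scope.
Local Open Scope ring_scope.

(* The penalized objective J_k is strictly convex, so a stationary point of
   J_k is its strict global minimizer. Let y minimize J_k over the compact
   feasible set C. First-order optimality gives <grad J_k(y), u> >= 0 for every
   direction u along which small steps stay feasible; if y lies on the boundary,
   Requirement 1 says that grad J_k(y) = grad f(y) + m grad g(y) does not point
   into C, and together these force grad J_k(y) = 0. Hence the global minimizer
   x_k equals y and is feasible. Comparing J_k(x_k) <= J_k(x_star) with
   f(x_star) <= f(x_k) gives g(x_k) <= g(x_star) and f(x_k) <= f(x_star) + m/k.
   As x_star is the unique minimizer of g on the solution set, f stays above
   f(x_star) + delta on the compact set of points with g <= g(x_star) at
   distance >= e from x_star, so x_k -> x_star. *)

Section RealInequalities.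
Context {R : realFieldType}.
Implicit Types a b h C t : R.

Lemma subrXX_mul_ge0 a b j : 0 <= a -> 0 <= b -> 0 <= (a - b) * (a ^+ j - b ^+ j).
Proof.
move=> a0 b0; have [ab|/ltW ba] := leP a b.
  by rewrite mulr_le0 // subr_le0 // lerXn2r.
by rewrite mulr_ge0 // subr_ge0 // lerXn2r.
Qed.

Lemma exprn_tangent_le a b k : 0 <= a -> 0 <= b ->
  k%:R * b ^+ k.-1 * (a - b) <= a ^+ k - b ^+ k.
Proof.
move=> a0 b0; rewrite subrXX -subr_ge0 [k%:R * _ * _]mulrC -mulrBr.
have -> : \sum_(i < k) a ^+ (k.-1 - i) * b ^+ i - k%:R * b ^+ k.-1 =
          \sum_(i < k) b ^+ i * (a ^+ (k.-1 - i) - b ^+ (k.-1 - i)).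
  have -> : k%:R * b ^+ k.-1 = \sum_(i < k) b ^+ k.-1.
    by rewrite sumr_const card_ord mulr_natl.
  rewrite -sumrB; apply: eq_bigr => i _.
  have ik : (i <= k.-1)%N by case: k i => [[]//|k] [i /=]; rewrite ltnS.
  by rewrite mulrBr -exprD subnKC // mulrC.
rewrite mulr_sumr sumr_ge0 // => i _.
by rewrite mulrCA mulr_ge0 ?exprn_ge0 ?subrXX_mul_ge0.
Qed.

Lemma subrXX_mul_le a b j : 0 <= a <= 1 -> 0 <= b <= 1 ->
  (a ^+ j - b ^+ j) * (a - b) <= j%:R * (a - b) ^+ 2.
Proof.
move=> /andP[a0 a1] /andP[b0 b1].
rewrite subrXX mulrAC -expr2 mulrC ler_wpM2r ?sqr_ge0 //.
have -> : j%:R = \sum_(i < j) (1 : R) by rewrite sumr_const card_ord.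
apply: ler_sum => i _.
by rewrite mulr_ile1 ?exprn_ge0 ?exprn_ile1.
Qed.

Lemma exprn_second_order_le a b k : 0 <= a <= 1 -> 0 <= b <= 1 ->
  a ^+ k - b ^+ k <= k%:R * b ^+ k.-1 * (a - b) + k%:R ^+ 2 * (a - b) ^+ 2.
Proof.
move=> ha hb; have /andP[a0 _] := ha; have /andP[b0 _] := hb.
have tangent_at_a := exprn_tangent_le k b0 a0.
have curvature := subrXX_mul_le k.-1 ha hb.
have k_ge0 : 0 <= k%:R :> R by [].
have km1_le : k%:R * (k.-1%:R * (a - b) ^+ 2) <= k%:R ^+ 2 * (a - b) ^+ 2.
  by rewrite mulrA ler_wpM2r ?sqr_ge0 // expr2 ler_wpM2l // ler_nat leq_pred.
have := ler_wpM2l k_ge0 curvature; lra.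
Qed.

Lemma penalty_step_le (m b beta gamma t : R) k : (0 < k)%N -> 0 <= m -> 0 <= gamma ->
  0 < t <= 1 -> 0 <= b <= 1 -> 0 <= b + t * beta + t ^+ 2 * gamma <= 1 ->
  m / k%:R * ((b + t * beta + t ^+ 2 * gamma) ^+ k - b ^+ k) <=
  t * (m * b ^+ k.-1 * beta) + t ^+ 2 * (m * (gamma + k%:R * (`|beta| + gamma) ^+ 2)).
Proof.
move=> k0 m0 gamma0 /andP[t0 t1] hb ha.
set a := b + t * beta + t ^+ 2 * gamma.
have k_gt0 : 0 < k%:R :> R by rewrite ltr0n.
have step : a - b = t * (beta + t * gamma) by rewrite /a; ring.
have pow_le1 : b ^+ k.-1 <= 1 by case/andP: hb => b0 b1; rewrite exprn_ile1.
have sq_le : (beta + t * gamma) ^+ 2 <= (`|beta| + gamma) ^+ 2.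
  have t_gamma : 0 <= t * gamma <= gamma by rewrite mulr_ge0 ?ler_piMl // ltW.
  have := ler_norm beta; have := ler_norm (- beta); rewrite normrN.
  have := normr_ge0 beta; nra.
have second := ler_wpM2l (divr_ge0 m0 (ltW k_gt0)) (exprn_second_order_le k ha hb).
have simplify : m / k%:R * (k%:R * b ^+ k.-1 * (a - b) + k%:R ^+ 2 * (a - b) ^+ 2) =
    m * b ^+ k.-1 * (a - b) + m * k%:R * (a - b) ^+ 2.
  by field; rewrite lt0r_neq0.
rewrite simplify step exprMn in second.
have curv := ler_wpM2l (mulr_ge0 m0 (ltW k_gt0)) (ler_wpM2l (sqr_ge0 t) sq_le).
have lin : m * b ^+ k.-1 * (t ^+ 2 * gamma) <= m * (t ^+ 2 * gamma).
  by rewrite -mulrA ler_wpM2l // ler_piMl // mulr_ge0 ?sqr_ge0.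
lra.
Qed.

Lemma ge0_of_quadratic_near0 h C t0 : 0 < t0 ->
  (forall t, 0 < t <= t0 -> 0 <= t * h + t ^+ 2 * C) -> 0 <= h.
Proof.
move=> t00 near0; rewrite leNgt; apply/negP => h_lt0.
pose t := Num.min t0 (- h / (`|C| + 1)).
have C1_gt0 : 0 < `|C| + 1 by rewrite ltr_wpDl.
have t_gt0 : 0 < t by rewrite lt_min t00 divr_gt0 // oppr_gt0.
have t_le : t * (`|C| + 1) <= - h.
  by rewrite -ler_pdivlMr // ge_min lexx orbT.
have := near0 t; rewrite t_gt0 ge_min lexx => /(_ isT).
have := ler_wpM2l (ltW (mulr_gt0 t_gt0 t_gt0)) (ler_norm C).
have := ler_wpM2l (ltW t_gt0) t_le; have := mulr_gt0 t_gt0 t_gt0; lra.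
Qed.

Lemma small_steps_feasible (b beta gamma : R) : 0 <= gamma -> b <= 1 ->
  b < 1 \/ beta < 0 ->
  exists2 t0, 0 < t0 & forall t, 0 < t <= t0 ->
    t <= 1 /\ b + t * beta + t ^+ 2 * gamma <= 1.
Proof.
move=> gamma0 b1 descent.
pose s := `|beta| + gamma + 1.
have s_gt0 : 0 < s by rewrite ltr_wpDl // addr_ge0.
pose c := if b < 1 then (1 - b) / s else - beta / s.
have c_gt0 : 0 < c.
  rewrite /c; case: ifPn => [b_lt1|b_ge1]; rewrite divr_gt0 ?subr_gt0 ?oppr_gt0 //.
  by case: descent => // b_lt1; rewrite b_lt1 in b_ge1.
exists (Num.min c 1); first by rewrite lt_min c_gt0 ltr01.
move=> t /andP[t0]; rewrite le_min => /andP[tc t1]; split => //.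
have ts : t * s <= if b < 1 then 1 - b else - beta.
  have := ler_wpM2r (ltW s_gt0) tc.
  by rewrite /c; case: ifP => _; rewrite divfK ?lt0r_neq0.
have t_beta : t * beta <= t * `|beta| by rewrite ler_wpM2l ?ler_norm // ltW.
have t_beta0 := mulr_ge0 (ltW t0) (normr_ge0 beta).
have t2_gamma : t ^+ 2 * gamma <= t * gamma.
  by rewrite expr2 -mulrA ler_piMl ?mulr_ge0 // ltW.
have tsE : t * s = t * `|beta| + t * gamma + t by rewrite /s; ring.
move: ts; case: ifP => _ ts; first lra.
have : t * (t * gamma) <= t * - beta by rewrite ler_wpM2l ?ltW //; lra.
lra.
Qed.

End RealInequalities.

Section QuadraticForms.
Context {R : realType} {n : nat}.
Implicit Types (M : 'M[R]_n) (u w x y : 'cV[R]_n) (a t : R).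

Lemma dotvC u w : dotv u w = dotv w u.
Proof. by rewrite /dotv -[u^T *m w]trmxK trmx_mul trmxK mxE. Qed.

Lemma dotvDr u w1 w2 : dotv u (w1 + w2) = dotv u w1 + dotv u w2.
Proof. by rewrite /dotv mulmxDr mxE. Qed.

Lemma dotvDl u1 u2 w : dotv (u1 + u2) w = dotv u1 w + dotv u2 w.
Proof. by rewrite dotvC dotvDr !(dotvC w). Qed.

Lemma dotvZr u a w : dotv u (a *: w) = a * dotv u w.
Proof. by rewrite /dotv -scalemxAr mxE. Qed.

Lemma dotvZl a u w : dotv (a *: u) w = a * dotv u w.
Proof. by rewrite dotvC dotvZr dotvC. Qed.

Lemma dotvNr u w : dotv u (- w) = - dotv u w.
Proof. by rewrite -scaleN1r dotvZr mulN1r. Qed.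

Lemma dotv0l w : dotv 0 w = 0.
Proof. by rewrite /dotv trmx0 mul0mx mxE. Qed.

Lemma dotvvE x : dotv x x = \sum_i x i 0 ^+ 2.
Proof. by rewrite /dotv mxE; apply: eq_bigr => i _; rewrite mxE expr2. Qed.

Lemma dotvv_ge0 x : 0 <= dotv x x.
Proof. by rewrite dotvvE sumr_ge0 // => i _; rewrite sqr_ge0. Qed.

Lemma dotvv_le0 x : dotv x x <= 0 -> x = 0.
Proof.
move=> x_le0; have /eqP : dotv x x = 0 by apply/eqP; rewrite eq_le x_le0 dotvv_ge0.
rewrite dotvvE psumr_eq0 => [/allP x0|i _]; last exact: sqr_ge0.
apply/matrixP => i j; rewrite ord1 mxE.
by have := x0 i (mem_index_enum _); rewrite sqrf_eq0 => /eqP.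
Qed.

Lemma dotv_mulmx_sym M u w : M^T = M -> dotv (M *m u) w = dotv u (M *m w).
Proof. by move=> sM; rewrite /dotv trmx_mul sM mulmxA. Qed.

Lemma qformE M x : qform M x = dotv x (M *m x).
Proof. by rewrite /qform /dotv mulmxA. Qed.

Lemma qformZ M a x : qform M (a *: x) = a ^+ 2 * qform M x.
Proof. by rewrite !qformE -scalemxAr dotvZl dotvZr mulrA -expr2. Qed.

Lemma qform_expand M y u t : M^T = M ->
  qform M (y + t *: u) = qform M y + 2 * t * dotv (M *m y) u + t ^+ 2 * qform M u.
Proof.
move=> sM; rewrite !qformE mulmxDr -scalemxAr dotvDl !dotvDr !dotvZl !dotvZr.
by rewrite -(dotv_mulmx_sym y u sM) (dotvC u (M *m y)); ring.
Qed.

Lemma fobj_expand Q q y u t : Q^T = Q ->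
  fobj Q q (y + t *: u) =
  fobj Q q y + t * dotv (grad_f Q q y) u + 2^-1 * t ^+ 2 * qform Q u.
Proof.
by move=> sQ; rewrite /fobj qform_expand // /grad_f dotvDl dotvDr dotvZr; field.
Qed.

Lemma gcon_expand A v y u t : A^T = A ->
  gcon A v (y + t *: u) =
  gcon A v y + t * dotv (grad_g A v y) u + t ^+ 2 * qform A u.
Proof. by move=> sA; rewrite /gcon addrAC qform_expand // /grad_g dotvZl; ring. Qed.

Lemma pd_qform_ge0 M x : pd M -> 0 <= qform M x.
Proof.
move=> [_ pdM]; have [->|/pdM/ltW//] := eqVneq x 0.
by rewrite qformE mulmx0 dotvC dotv0l.
Qed.

Lemma pd_qform_le0 M x : pd M -> qform M x <= 0 -> x = 0.
Proof. by move=> [_ pdM]; have [//|/pdM] := eqVneq x 0; rewrite leNgt => ->. Qed.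

End QuadraticForms.

Section CompactnessContinuity.
Context {R : realType}.

Lemma mx_norm_trmx_le p r (x : 'M[R]_(p, r)) : `|x^T| <= `|x|.
Proof.
rewrite [leLHS]/Num.norm /= mx_normrE.
apply/bigmax_leP; split => [|[i j] _]; first exact: normr_ge0.
rewrite mxE [leRHS]/Num.norm /= mx_normrE.
by apply/bigmax_geP; right; exists (j, i).
Qed.

Lemma mx_norm_trmx p r (x : 'M[R]_(p, r)) : `|x^T| = `|x|.
Proof.
apply/le_anti/andP; split; first exact: mx_norm_trmx_le.
by rewrite -[in leLHS](trmxK x) mx_norm_trmx_le.
Qed.

Lemma trmx_continuous p r : continuous (@trmx R p r).
Proof.
move=> x; apply/(@cvgrPdist_lt _ _ _ (nbhs x)) => e e0; near=> z.
rewrite -linearB mx_norm_trmx; near: z; exact: cvgr_dist_lt.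
Unshelve. all: by end_near. Qed.

Lemma bounded_closed_compact_cV {n} (K : set 'cV[R]_n) M :
  (forall x, K x -> `|x| <= M) -> closed K -> compact K.
Proof.
move=> bK cK; pose P := [set r : 'rV[R]_n | K r^T].
have -> : K = trmx @` P.
  by apply/seteqP; split => [x Kx|_ [r Pr <-]//]; exists x^T; rewrite /P /= trmxK.
apply: continuous_compact; first exact/continuous_subspaceT/trmx_continuous.
apply: bounded_closed_compact; last by apply: preimage_closed cK => r _; exact: trmx_continuous.
rewrite /bounded_set /bounded_near; near=> N => r Pr /=.
rewrite -mx_norm_trmx; apply: le_trans (bK _ Pr) _.
by near: N; apply: nbhs_pinfty_ge; exact: num_real.
Unshelve. all: by end_near. Qed.

Lemma EVT_min_cV {n} (phi : 'cV[R]_n -> R) (K : set 'cV[R]_n) M :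
  K !=set0 -> closed K -> (forall x, K x -> `|x| <= M) -> continuous phi ->
  exists2 c, K c & forall x, K x -> phi c <= phi x.
Proof.
move=> K0 cK bK cphi.
have [c] := compact_EVT_min K0 (bounded_closed_compact_cV bK cK) (continuous_subspaceT cphi).
by rewrite inE => Kc cmin; exists c => // x Kx; apply: cmin; rewrite inE.
Qed.

Lemma sum_continuous (T : topologicalType) (I : Type) (r : seq I) (F : I -> T -> R) :
  (forall i, continuous (F i)) -> continuous (fun x => \sum_(i <- r) F i x).
Proof. by move=> Fc; apply: continuous_big => //; exact: add_continuous. Qed.

Lemma closed_sublevel (T : topologicalType) (phi : T -> R) c :
  continuous phi -> closed [set x | phi x <= c].
Proof.
move=> cphi; apply: (@preimage_closed _ _ phi [set r : R | r <= c]); last exact: closed_le.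
by move=> x _; exact: cphi.
Qed.

Lemma closed_superlevel (T : topologicalType) (phi : T -> R) c :
  continuous phi -> closed [set x | c <= phi x].
Proof.
move=> cphi; apply: (@preimage_closed _ _ phi [set r : R | c <= r]); last exact: closed_ge.
by move=> x _; exact: cphi.
Qed.

Context {n : nat}.
Implicit Types (M : 'M[R]_n) (u : 'cV[R]_n).

Lemma dotv_continuous u : continuous (dotv u).
Proof.
have -> : dotv u = fun x => \sum_i u i 0 * x i 0.
  by apply: funext => x; rewrite /dotv mxE; apply: eq_bigr => i _; rewrite mxE.
apply: sum_continuous => i x; apply: continuousM; first exact: cst_continuous.
exact: coord_continuous.
Qed.

Lemma qform_continuous M : continuous (qform M).
Proof.
have -> : qform M = fun x => \sum_j (\sum_i x i 0 * M i j) * x j 0.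
  apply: funext => x; rewrite /qform mxE; apply: eq_bigr => j _; rewrite mxE.
  by congr (_ * _); apply: eq_bigr => i _; rewrite mxE.
apply: sum_continuous => j x; apply: continuousM; last exact: coord_continuous.
apply: sum_continuous => i y; apply: continuousM; last exact: cst_continuous.
exact: coord_continuous.
Qed.

Lemma fobj_continuous M u : continuous (fobj M u).
Proof.
move=> x; apply: (@continuousD _ _ _ (fun y => 2^-1 * qform M y) (dotv u)).
  by apply: continuousM; [exact: cst_continuous | exact: qform_continuous].
exact: dotv_continuous.
Qed.

Lemma gcon_continuous M u : continuous (gcon M u).
Proof.
move=> x; apply: continuous_comp; last exact: qform_continuous.
by apply: continuousB; [exact: cvg_id | exact: cst_continuous].
Qed.

Lemma Jk_continuous (Q : 'M[R]_n) q (A : 'M[R]_n) v (m : R) k : continuous (Jk Q q A v m k).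
Proof.
move=> x; apply: (@continuousD _ _ _ (fobj Q q) (pen A v m k)).
  exact: fobj_continuous.
apply: (@continuousM _ _ (fun=> m / k%:R) (fun y => gcon A v y ^+ k)).
  exact: cst_continuous.
apply: (@continuous_comp _ _ _ (gcon A v) (fun r => r ^+ k)).
  exact: gcon_continuous.
exact: exprn_continuous.
Qed.

End CompactnessContinuity.

Lemma pd_qform_coercive {R : realType} {n} (M : 'M[R]_n) : pd M ->
  exists2 c, 0 < c & forall x, c * `|x| ^+ 2 <= qform M x.
Proof.
move=> pdM; pose S := [set s : 'cV[R]_n | `|s| = 1].
have at0 c x : x = 0 -> c * `|x| ^+ 2 <= qform M x.
  by move=> ->; rewrite normr0 expr0n mulr0 pd_qform_ge0.
have [S0|noS] := pselect (S !=set0); last first.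
  exists 1 => // x; apply: at0; apply: contra_notP noS => /eqP x0.
  by exists (`|x|^-1 *: x); exact: normfZV.
have cS : closed S.
  apply: (@preimage_closed _ _ (@Num.norm _ 'cV[R]_n) [set 1 : R]).
    by move=> s _; exact: norm_continuous.
  exact: closed_eq.
have S_bounded x : S x -> `|x| <= 1 by move=> ->.
have [s1 s1_unit s1_min] := EVT_min_cV S0 cS S_bounded (@qform_continuous _ _ M).
exists (qform M s1).
  by apply: pdM.2; rewrite -normr_eq0 s1_unit oner_neq0.
move=> x; have [/at0//|x0] := eqVneq x 0.
have := s1_min _ (normfZV x0).
by rewrite qformZ exprVn mulrC ler_pdivlMr // exprn_gt0 // normr_gt0.
Qed.

Section PenaltyMethod.
Variables (R : realType) (n : nat) (Q : 'M[R]_n) (q : 'cV[R]_n) (A : 'M[R]_n)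
  (v : 'cV[R]_n) (m : R).
Hypotheses (psdQ : psd Q) (pdA : pd A) (m_gt0 : 0 < m).

Local Notation f := (fobj Q q).
Local Notation g := (gcon A v).
Local Notation J k := (Jk Q q A v m k).

Definition grad_Jk k x := grad_f Q q x + (m * g x ^+ k.-1) *: grad_g A v x.

Lemma gcon_ge0 x : 0 <= g x.
Proof. exact: pd_qform_ge0. Qed.

Lemma gcon_le0 x : g x <= 0 -> x = v.
Proof. by move=> /(pd_qform_le0 pdA)/eqP; rewrite subr_eq0 => /eqP. Qed.

Lemma gcon_center : g v = 0.
Proof. by rewrite /gcon subrr qformE mulmx0 dotvC dotv0l. Qed.

Lemma feasible_bounded : exists M, forall x, g x <= 1 -> `|x| <= M.
Proof.
have [c c_gt0 coercive] := pd_qform_coercive pdA.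
exists (`|v| + 1 + c^-1) => x gx1.
have dist_sq : `|x - v| ^+ 2 <= c^-1.
  by rewrite -(ler_pM2l c_gt0) mulfV ?gt_eqF // (le_trans (coercive _) gx1).
have dist : `|x - v| <= 1 + c^-1.
  have := normr_ge0 (x - v); have := invr_gt0 c; rewrite c_gt0 expr2 in dist_sq *; nra.
rewrite -(subrK v x); apply: le_trans (ler_normD _ _) _; lra.
Qed.

Lemma EVT_min_feasible (phi : 'cV[R]_n -> R) (K : set 'cV[R]_n) :
  K `<=` [set x | g x <= 1] -> K !=set0 -> closed K -> continuous phi ->
  exists2 c, K c & forall x, K x -> phi c <= phi x.
Proof.
move=> KC K0 cK cphi; have [M bM] := feasible_bounded.
by apply: (EVT_min_cV K0 cK (M := M)) => // x /KC/bM.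
Qed.

Lemma feasible_closed : closed [set x | g x <= 1].
Proof. exact: closed_sublevel (@gcon_continuous _ _ A v). Qed.

Lemma feasible_nonempty : [set x | g x <= 1] !=set0.
Proof. by exists v; rewrite /= gcon_center ler01. Qed.

Lemma dotv_grad_g y : dotv (grad_g A v y) (y - v) = 2 * g y.
Proof. by rewrite /grad_g dotvZl dotv_mulmx_sym -?qformE //; case: pdA. Qed.

Lemma Jk_step_le k y u : (0 < k)%N -> g y <= 1 ->
  exists C, forall t, 0 < t <= 1 -> g (y + t *: u) <= 1 ->
    J k (y + t *: u) <= J k y + t * dotv (grad_Jk k y) u + t ^+ 2 * C.
Proof.
move=> k0 gy1; set beta := dotv (grad_g A v y) u; set gamma := qform A u.
exists (2^-1 * qform Q u + m * (gamma + k%:R * (`|beta| + gamma) ^+ 2)) => t t01 gt1.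
have gE := gcon_expand v y u t pdA.1.
have gy01 : 0 <= g y <= 1 by rewrite gcon_ge0 gy1.
have gt01 : 0 <= g y + t * beta + t ^+ 2 * gamma <= 1 by rewrite -gE gcon_ge0 gt1.
have := penalty_step_le k0 (ltW m_gt0) (pd_qform_ge0 u pdA) t01 gy01 gt01.
rewrite /Jk /pen fobj_expand ?gE; last by case: psdQ.
rewrite /grad_Jk dotvDl dotvZl -/beta -/gamma; lra.
Qed.

Lemma Jk_feasible_min_variational k y u : (0 < k)%N -> g y <= 1 ->
  (forall z, g z <= 1 -> J k y <= J k z) ->
  g y < 1 \/ dotv (grad_g A v y) u < 0 -> 0 <= dotv (grad_Jk k y) u.
Proof.
move=> k0 gy1 ymin descent; have [C step] := Jk_step_le u k0 gy1.
have [t0 t0_gt0 feasible] := small_steps_feasible (pd_qform_ge0 u pdA) gy1 descent.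
apply: (ge0_of_quadratic_near0 (C := C) t0_gt0) => t t_range.
have [t_le1 gt1] := feasible t t_range; rewrite -gcon_expand in gt1; last by case: pdA.
have t01 : 0 < t <= 1 by case/andP: t_range => -> _.
have := step t t01 gt1; have := ymin _ gt1; lra.
Qed.

Lemma grad_Jk_feasible_min_eq0 k y : requirement1 Q q A v m -> (0 < k)%N -> g y <= 1 ->
  (forall z, g z <= 1 -> J k y <= J k z) -> grad_Jk k y = 0.
Proof.
move=> [_ req] k0 gy1 ymin; set H := grad_Jk k y; set G := grad_g A v y.
have var u : g y < 1 \/ dotv G u < 0 -> 0 <= dotv H u.
  exact: Jk_feasible_min_variational.
have var_descent u : dotv G u < 0 -> 0 <= dotv H u by move=> ?; apply: var; right.
have [gy_lt1|gy_ge1] := ltP (g y) 1.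
  by apply: dotvv_le0; have := var (- H) (or_introl gy_lt1); rewrite dotvNr; lra.
have gy_eq1 : g y = 1 by apply/le_anti; rewrite gy1 gy_ge1.
have HE : H = grad_f Q q y + m *: G by rewrite /H /grad_Jk gy_eq1 expr1n mulr1.
have G_gt0 : 0 < dotv G G.
  rewrite lt_def dotvv_ge0 andbT; apply/eqP => GG0.
  have G0 : G = 0 by apply: dotvv_le0; rewrite GG0.
  by have := dotv_grad_g y; rewrite -/G G0 dotv0l gy_eq1; lra.
(* Requirement 1 and the descent direction -G force <G, H> = 0, after which
   the descent direction -(H + G) forces <H, H> <= 0. *)
have GH_ge0 : 0 <= dotv G H by rewrite HE; exact: req.
have HG_le0 : dotv H G <= 0.
  have /var_descent : dotv G (- G) < 0 by rewrite dotvNr oppr_lt0.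
  by rewrite dotvNr oppr_ge0.
rewrite (dotvC G) in GH_ge0; apply: dotvv_le0.
have /var_descent : dotv G (- (H + G)) < 0 by rewrite dotvNr dotvDr (dotvC G H); lra.
by rewrite dotvNr dotvDr; lra.
Qed.

Lemma Jk_stationary_lt k y x : (0 < k)%N -> grad_Jk k y = 0 -> x != y ->
  J k y < J k x.
Proof.
move=> k0 stationary xy; set d := x - y.
have xE : x = y + 1 *: d by rewrite scale1r addrC subrK.
have fx : f x = f y + dotv (grad_f Q q y) d + 2^-1 * qform Q d.
  by rewrite {1}xE fobj_expand ?expr1n ?mul1r ?mulr1 //; case: psdQ.
have gx : g x = g y + dotv (grad_g A v y) d + qform A d.
  by rewrite {1}xE gcon_expand ?expr1n ?mul1r //; case: pdA.
have fd : dotv (grad_f Q q y) d = - (m * g y ^+ k.-1) * dotv (grad_g A v y) d.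
  have := congr1 (fun w => dotv w d) stationary.
  by rewrite /= /grad_Jk dotvDl dotvZl dotv0l; lra.
have dQd := psdQ.2 d.
have dAd : 0 < qform A d by apply: pdA.2; rewrite subr_eq0.
rewrite /Jk /pen fx.
(* The penalty increase is bounded below by its tangent at g y; when g y = 0
   the tangent is flat and the penalty of x alone gives strictness. *)
have [gy_gt0|gy_le0] := ltP 0 (g y).
  have tangent := exprn_tangent_le k (gcon_ge0 x) (gcon_ge0 y).
  have := ler_wpM2l (divr_ge0 (ltW m_gt0) (ler0n _ k)) tangent.
  have -> : m / k%:R * (k%:R * g y ^+ k.-1 * (g x - g y)) = m * g y ^+ k.-1 * (g x - g y).
    by field; rewrite pnatr_eq0 -lt0n.
  have := mulr_gt0 (mulr_gt0 m_gt0 (exprn_gt0 k.-1 gy_gt0)) dAd.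
  rewrite gx; lra.
have yv : y = v by apply: gcon_le0.
have gx_gt0 : 0 < g x.
  rewrite lt_def gcon_ge0 andbT; apply: contraNN xy => /eqP gx0.
  by rewrite yv; apply/eqP/gcon_le0; rewrite gx0.
have k_gt0 : 0 < k%:R :> R by rewrite ltr0n.
have := mulr_gt0 (divr_gt0 m_gt0 k_gt0) (exprn_gt0 k gx_gt0).
rewrite fd /grad_g yv subrr mulmx0 scaler0 dotv0l gcon_center expr0n eqn0Ngt k0.
by rewrite /= !mulr0; lra.
Qed.

Lemma Jk_argmin_feasible k x : requirement1 Q q A v m -> (0 < k)%N ->
  (forall y, J k x <= J k y) -> g x <= 1.
Proof.
move=> req k0 xmin.
have [y gy1 ymin] : exists2 y, g y <= 1 & forall z, g z <= 1 -> J k y <= J k z.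
  apply: (EVT_min_feasible (fun _ => id) feasible_nonempty feasible_closed).
  exact: Jk_continuous.
have [-> //|xy] := eqVneq x y.
have := Jk_stationary_lt k0 (grad_Jk_feasible_min_eq0 req k0 gy1 ymin) xy.
by rewrite ltNge xmin.
Qed.

Local Notation X := (solset Q q A v).
Local Notation xstar := (gmin_on_solset Q q A v).

Lemma fobj_midpoint y z :
  f (z + 2^-1 *: (y - z)) = 2^-1 * (f y + f z) - 8^-1 * qform Q (y - z).
Proof.
have sQ : Q^T = Q by case: psdQ.
have := fobj_expand q z (y - z) 1 sQ; rewrite scale1r addrC subrK => fy.
by rewrite fobj_expand // fy; field.
Qed.

Lemma gcon_midpoint y z :
  g (z + 2^-1 *: (y - z)) = 2^-1 * (g y + g z) - 4^-1 * qform A (y - z).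
Proof.
have sA : A^T = A by case: pdA.
have := gcon_expand v z (y - z) 1 sA; rewrite scale1r addrC subrK => gy.
by rewrite gcon_expand // gy; field.
Qed.

Lemma gmin_on_solset_unique y z : xstar y -> xstar z -> y = z.
Proof.
move=> [[gy1 fy_min] gy_min] [[gz1 fz_min] gz_min].
set w := z + 2^-1 *: (y - z).
have fyz := fy_min z gz1; have fzy := fz_min y gy1.
have := pd_qform_ge0 (y - z) pdA; have := psdQ.2 (y - z) => dQd dAd.
have gw1 : g w <= 1 by rewrite gcon_midpoint; lra.
have Xw : X w.
  by split => // x gx1; have := fz_min x gx1; rewrite fobj_midpoint; lra.
have := gy_min w Xw; have := gz_min w Xw; rewrite gcon_midpoint => gzw gyw.
by apply/eqP; rewrite -subr_eq0; apply/eqP/(pd_qform_le0 pdA); lra.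
Qed.

Lemma exists_gmin_on_solset : exists x, xstar x.
Proof.
have fc := @fobj_continuous _ _ Q q.
have [s s_feas s_min] :=
  EVT_min_feasible (fun _ => id) feasible_nonempty feasible_closed fc.
pose S := [set x | g x <= 1] `&` [set x | f x <= f s].
have [x [gx1 fx] x_min] : exists2 x, S x & forall y, S y -> g x <= g y.
  apply: (EVT_min_feasible (fun _ => @proj1 _ _)).
  - by exists s; split => /=.
  - by apply: closedI; [exact: feasible_closed | exact: closed_sublevel fc].
  - exact: gcon_continuous.
exists x; split; first by split => // y gy1; apply: le_trans fx (s_min y gy1).
by move=> y [gy1 fy]; apply: x_min; split => //; exact: fy.
Qed.

Lemma penalty_argmin_bounds k x xs : requirement1 Q q A v m -> (0 < k)%N ->
  (forall y, J k x <= J k y) -> xstar xs -> g x <= g xs /\ f x <= f xs + m / k%:R.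
Proof.
move=> req k0 xmin [[gxs1 fxs_min] _].
have gx1 := Jk_argmin_feasible req k0 xmin.
have fxs_le := fxs_min x gx1.
have := xmin xs; rewrite /Jk /pen.
have mk_gt0 : 0 < m / k%:R by rewrite divr_gt0 // ltr0n.
have gxs_k : g xs ^+ k <= 1 by rewrite exprn_ile1 // gcon_ge0.
have gx_k : 0 <= g x ^+ k by rewrite exprn_ge0 // gcon_ge0.
move=> Jle; split.
  rewrite -(ler_pXn2r k0) ?nnegrE ?gcon_ge0 // -(ler_pM2l mk_gt0); lra.
have := ler_wpM2l (ltW mk_gt0) gxs_k; have := mulr_ge0 (ltW mk_gt0) gx_k; lra.
Qed.

Lemma gmin_on_solset_sharp xs e : xstar xs -> 0 < e ->
  exists2 delta, 0 < delta &
    forall x, g x <= g xs -> f x < f xs + delta -> `|x - xs| < e.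
Proof.
move=> xs_min e_gt0; have [[gxs1 fxs_min] gxs_min] := xs_min.
pose K := [set x | g x <= g xs] `&` [set x | e <= `|x - xs|].
have [K0|noK] := pselect (K !=set0); last first.
  exists 1 => // x gx _; rewrite ltNge; apply/negP => ex; apply: noK; by exists x.
have cK : closed K.
  apply: closedI; first exact: closed_sublevel (@gcon_continuous _ _ A v).
  apply: closed_superlevel => y; apply: continuous_comp; last exact: norm_continuous.
  by apply: continuousB; [exact: cvg_id | exact: cst_continuous].
have KC : K `<=` [set x | g x <= 1] by move=> x [gx _]; apply: le_trans gx gxs1.
have [z [gz ez] z_min] := EVT_min_feasible KC K0 cK (@fobj_continuous _ _ Q q).
exists (f z - f xs) => [|x gx fx]; last first.
  by rewrite ltNge; apply/negP => ex; have := z_min x (conj gx ex); lra.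
rewrite subr_gt0 ltNge; apply/negP => fz_le.
have Xz : X z.
  by split => [|y gy1]; [exact: KC | exact: le_trans fz_le (fxs_min y gy1)].
have zxs : z = xs.
  by apply: gmin_on_solset_unique xs_min; split => // y Xy; apply: le_trans gz (gxs_min y Xy).
by move: ez; rewrite zxs /= subrr normr0 leNgt e_gt0.
Qed.

Lemma penalty_argmin_cvg (xk : nat -> 'cV[R]_n) xs : requirement1 Q q A v m ->
  (forall k, (0 < k)%N -> forall y, J k (xk k) <= J k y) -> xstar xs ->
  xk @ \oo --> xs.
Proof.
move=> req xk_min xs_min; apply/cvgrPdist_lt => e e_gt0.
have [delta delta_gt0 sharp] := gmin_on_solset_sharp xs_min e_gt0.
pose N := Num.bound (m / delta).
have mN : m / delta < N%:R by apply: archi_boundP; rewrite divr_ge0 // ltW.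
exists N.+1 => // k /= Nk; have k0 : (0 < k)%N by apply: leq_trans Nk.
have [gk fk] := penalty_argmin_bounds req k0 (xk_min k k0) xs_min.
rewrite distrC; apply: sharp gk (le_lt_trans fk _); rewrite ltrD2l.
rewrite ltr_pdivrMr ?ltr0n // mulrC -ltr_pdivrMr //.
by apply: lt_trans mN _; rewrite ltr_nat.
Qed.

End PenaltyMethod.

Theorem proposition1 (R : realType) (n : nat)
  (Q : 'M[R]_n) (q : 'cV[R]_n) (A : 'M[R]_n) (v : 'cV[R]_n) (m : R)
  (xk : nat -> 'cV[R]_n) :
  psd Q -> pd A -> 0 < m -> requirement1 Q q A v m ->
  (forall k, (0 < k)%N -> forall y, Jk Q q A v m k (xk k) <= Jk Q q A v m k y) ->
  (forall k, (0 < k)%N -> gcon A v (xk k) <= 1) /\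
  exists xstar : 'cV[R]_n,
    gmin_on_solset Q q A v xstar /\
    (forall y, gmin_on_solset Q q A v y -> y = xstar) /\
    (xk @ \oo --> xstar).
Proof.
move=> psdQ pdA m_gt0 req xk_min; split.
  by move=> k k0; apply: (Jk_argmin_feasible psdQ pdA m_gt0 req k0 (xk_min k k0)).
have [xs xs_min] := exists_gmin_on_solset Q q v pdA.
exists xs; split=> //; split.
  by move=> y y_min; apply: (gmin_on_solset_unique psdQ pdA y_min xs_min).
exact: (penalty_argmin_cvg psdQ pdA m_gt0 req xk_min xs_min).
Qed.
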